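(* For every integer $n\ge 4$ there exist $n$ pairwise distinct parallel lines in the plane such that there is no regular $n$-gon whose $n$ vertices lie one on each of these lines. *)

From Stdlib Require Export Reals.
Open Scope R_scope.

(* The line { p | a * p.1 + b * p.2 = c } (a line provided (a,b) <> (0,0)). *)
Definition on_line (a b c : R) (p : R * R) : Prop := a * fst p + b * snd p = c.

Definition regular_polygon (n : nat) (P : nat -> R * R) : Prop :=
  exists (cx cy r th : R), 0 < r /\
    forall k : nat, (k < n)%nat ->
      P k = (cx + r * cos (th + 2 * PI * INR k / INR n),
             cy + r * sin (th + 2 * PI * INR k / INR n)).

From Stdlib Require Import Reals Lra Lia List Permutation FinFun.
Open Scope R_scope.

(* Take the vertical lines x = c_i with c_0 = -T and c_i = i for 0 < i < n,
   where T = 1 + ... + (n-1); then sum c_i = 0 and sum c_i^3 = T^2 - T^3 <> 0.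
   The abscissas cx + r cos(th + 2 pi k / n) of a regular n-gon sum to n cx,
   and since cos^3 t = (3 cos t + cos 3t) / 4 and both harmonics 1 and 3 are
   nontrivial modulo n when n >= 4, their centred cubes sum to 0.  Vertices on
   the lines force the two multisets of abscissas to agree, so cx = 0 and
   sum c_i^3 = 0, a contradiction. *)

Definition lsum (l : list R) : R := fold_right Rplus 0 l.

Lemma lsum_app l1 l2 : lsum (l1 ++ l2) = lsum l1 + lsum l2.
Proof. induction l1; simpl; [ring | rewrite IHl1; ring]. Qed.

Lemma lsum_perm l l' : Permutation l l' -> lsum l = lsum l'.
Proof. induction 1; simpl; lra. Qed.

Lemma lsum_map_lin (f g : nat -> R) a b l :
  lsum (map (fun k => a * f k + b * g k) l) = a * lsum (map f l) + b * lsum (map g l).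
Proof. induction l; simpl; [ring | rewrite IHl; ring]. Qed.

Lemma lsum_map_const a l : lsum (map (fun _ : nat => a) l) = a * INR (length l).
Proof.
  induction l as [|x l IH]; [simpl; ring|].
  cbn [map length lsum fold_right]; fold (lsum (map (fun _ : nat => a) l)).
  rewrite IH, S_INR; ring.
Qed.

Lemma lsum_map_reindex (g : nat -> R) (s : nat -> nat) n :
  (forall k, (k < n)%nat -> (s k < n)%nat) ->
  (forall i j, (i < n)%nat -> (j < n)%nat -> s i = s j -> i = j) ->
  lsum (map (fun k => g (s k)) (seq 0 n)) = lsum (map g (seq 0 n)).
Proof.
  intros Hrange Hinj.
  assert (Hperm : Permutation (map s (seq 0 n)) (seq 0 n)).
  { apply Permutation_map_same_l.
    - apply Injective_map_NoDup_in; [|apply seq_NoDup].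
      intros i j Hi Hj; apply in_seq in Hi, Hj; apply Hinj; lia.
    - intros y Hy; apply in_map_iff in Hy as [k [<- Hk]]; apply in_seq in Hk.
      apply in_seq; specialize (Hrange k); lia. }
  rewrite <- map_map; apply lsum_perm, Permutation_map, Hperm.
Qed.

Lemma lsum_seq1_INR m : lsum (map INR (seq 1 m)) = INR m * (INR m + 1) / 2.
Proof.
  induction m; [simpl; field|].
  rewrite seq_S, map_app, lsum_app, IHm; cbn -[INR]; rewrite !S_INR; field.
Qed.

Lemma lsum_seq1_INR_cube m :
  lsum (map (fun i => INR i ^ 3) (seq 1 m)) = (INR m * (INR m + 1) / 2) ^ 2.
Proof.
  induction m; [simpl; field|].
  rewrite seq_S, map_app, lsum_app, IHm; cbn -[INR]; rewrite !S_INR; field.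
Qed.

Lemma cos_cube x : cos x ^ 3 = (3 * cos x + cos (3 * x)) / 4.
Proof.
  replace (3 * x) with (2 * x + x) by ring.
  rewrite cos_plus, cos_2a_cos, sin_2a.
  pose proof (sin2 x) as Hs; unfold Rsqr in Hs.
  replace (2 * sin x * cos x * sin x) with (2 * cos x * (sin x * sin x)) by ring.
  rewrite Hs; field.
Qed.

(* Each term is 2 sin(b/2) cos t = sin(t + b/2) - sin(t - b/2), so the sum telescopes. *)
Lemma lsum_cos_arith_telescope a b m :
  2 * sin (b / 2) * lsum (map (fun k => cos (a + INR k * b)) (seq 0 m))
  = sin (a + INR m * b - b / 2) - sin (a - b / 2).
Proof.
  induction m.
  - simpl; replace (a + 0 * b - b / 2) with (a - b / 2) by ring; ring.
  - rewrite seq_S, map_app, lsum_app, Rmult_plus_distr_l, IHm, S_INR; simpl.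
    replace (a + (INR m + 1) * b - b / 2) with (a + INR m * b + b / 2) by field.
    replace (a + INR m * b - b / 2) with (a + INR m * b + - (b / 2)) by ring.
    set (t := a + INR m * b); rewrite !sin_plus, cos_neg, sin_neg; ring.
Qed.

Lemma lsum_cos_harmonic a (j n : nat) : (0 < j < n)%nat ->
  lsum (map (fun k => cos (a + INR k * (2 * PI * INR j / INR n))) (seq 0 n)) = 0.
Proof.
  intros Hjn.
  set (b := 2 * PI * INR j / INR n).
  assert (Hn : 0 < INR n) by (apply lt_0_INR; lia).
  assert (Hj : 0 < INR j) by (apply lt_0_INR; lia).
  assert (Hjn' : INR j < INR n) by (apply lt_INR; lia).
  assert (Hhalf : b / 2 = PI * (INR j / INR n)) by (unfold b; field; lra).
  assert (Hsin : 0 < sin (b / 2)).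
  { assert (0 < INR j / INR n < 1).
    { split; [apply Rdiv_lt_0_compat; lra|].
      apply (Rmult_lt_reg_r (INR n)); [lra|]; field_simplify; lra. }
    pose proof PI_RGT_0.
    rewrite Hhalf; apply sin_gt_0; nra. }
  pose proof (lsum_cos_arith_telescope a b n) as H.
  replace (a + INR n * b - b / 2) with (a - b / 2 + 2 * INR j * PI) in H
    by (unfold b; field; lra).
  rewrite sin_period in H.
  apply (Rmult_eq_reg_l (2 * sin (b / 2))); [rewrite H; ring | lra].
Qed.

Definition abscissa (n : nat) (cx r th : R) (k : nat) : R :=
  cx + r * cos (th + 2 * PI * INR k / INR n).

Section RegularAbscissas.

Variables (n : nat) (cx r th : R).
Hypothesis n_gt3 : (3 < n)%nat.

Let angle_harmonic (j : nat) (k : nat) :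
  INR j * (th + 2 * PI * INR k / INR n)
  = INR j * th + INR k * (2 * PI * INR j / INR n).
Proof.
  assert (0 < INR n) by (apply lt_0_INR; lia).
  field; lra.
Qed.

Lemma lsum_abscissa : lsum (map (fun k => abscissa n cx r th k) (seq 0 n)) = INR n * cx.
Proof.
  rewrite (map_ext _ (fun k =>
      cx * 1 + r * cos (INR 1 * th + INR k * (2 * PI * INR 1 / INR n)))).
  - rewrite lsum_map_lin, lsum_map_const, lsum_cos_harmonic, length_seq by lia; ring.
  - intro k; unfold abscissa; rewrite <- angle_harmonic; change (INR 1) with 1.
    rewrite Rmult_1_l; ring.
Qed.

Lemma lsum_abscissa_centered_cube :
  lsum (map (fun k => (abscissa n cx r th k - cx) ^ 3) (seq 0 n)) = 0.
Proof.
  rewrite (map_ext _ (fun k =>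
      (3 * r ^ 3 / 4) * cos (INR 1 * th + INR k * (2 * PI * INR 1 / INR n))
    + (r ^ 3 / 4) * cos (INR 3 * th + INR k * (2 * PI * INR 3 / INR n)))).
  - rewrite lsum_map_lin, !lsum_cos_harmonic by lia; ring.
  - intro k; unfold abscissa.
    replace ((cx + r * cos (th + 2 * PI * INR k / INR n) - cx) ^ 3)
      with (r ^ 3 * cos (th + 2 * PI * INR k / INR n) ^ 3) by ring.
    rewrite <- !angle_harmonic; change (INR 1) with 1; replace (INR 3) with 3 by (simpl; ring).
    rewrite Rmult_1_l, cos_cube; field.
Qed.

End RegularAbscissas.

Definition triangular (m : nat) : R := INR m * (INR m + 1) / 2.

(* The abscissas of the n = m + 1 lines of the construction. *)
Definition offset (m i : nat) : R := if Nat.eqb i 0 then - triangular m else INR i.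

Lemma triangular_ge0 m : 0 <= triangular m.
Proof. unfold triangular; pose proof (pos_INR m); nra. Qed.

Lemma offset_inj m i j : offset m i = offset m j -> i = j.
Proof.
  unfold offset; pose proof (triangular_ge0 m).
  destruct (Nat.eqb_spec i 0), (Nat.eqb_spec j 0); intro Hij; try lia.
  - assert (0 < INR j) by (apply lt_0_INR; lia); lra.
  - assert (0 < INR i) by (apply lt_0_INR; lia); lra.
  - apply INR_eq, Hij.
Qed.

Lemma lsum_offset_pow (p : nat) m :
  lsum (map (fun i => offset m i ^ p) (seq 0 (S m)))
  = (- triangular m) ^ p + lsum (map (fun i => INR i ^ p) (seq 1 m)).
Proof.
  cbn [seq map lsum fold_right]; f_equal.
  apply f_equal, map_ext_in; intros i Hi; apply in_seq in Hi.
  unfold offset; destruct (Nat.eqb_spec i 0); [lia | reflexivity].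
Qed.

Lemma lsum_offset m : lsum (map (fun i => offset m i) (seq 0 (S m))) = 0.
Proof.
  rewrite (map_ext _ (fun i => offset m i ^ 1)) by (intro; ring).
  rewrite lsum_offset_pow, (map_ext _ INR) by (intro; ring).
  rewrite lsum_seq1_INR; unfold triangular; ring.
Qed.

Lemma lsum_offset_cube m :
  lsum (map (fun i => offset m i ^ 3) (seq 0 (S m))) = triangular m ^ 2 - triangular m ^ 3.
Proof. rewrite lsum_offset_pow, lsum_seq1_INR_cube; unfold triangular; ring. Qed.

Theorem mainTheorem2 :
  forall n : nat, (4 <= n)%nat ->
  exists (a b : R) (c : nat -> R),
    (a <> 0 \/ b <> 0) /\
    (forall i j : nat, (i < n)%nat -> (j < n)%nat -> c i = c j -> i = j) /\
    ~ (exists P : nat -> R * R,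
         regular_polygon n P /\
         exists s : nat -> nat,
           (forall k, (k < n)%nat -> (s k < n)%nat) /\
           (forall i j, (i < n)%nat -> (j < n)%nat -> s i = s j -> i = j) /\
           (forall k, (k < n)%nat -> on_line a b (c (s k)) (P k))).
Proof.
  intros [|m] Hm; [lia|].
  exists 1, 0, (offset m); split; [left; lra|].
  split; [intros i j _ _; apply offset_inj|].
  intros [P [[cx [cy [r [th [_ HP]]]]] [s [Hrange [Hinj Hon]]]]].
  assert (Hvertex : forall g : R -> R,
    lsum (map (fun k => g (abscissa (S m) cx r th k)) (seq 0 (S m)))
    = lsum (map (fun i => g (offset m i)) (seq 0 (S m)))).
  { intro g; rewrite <- (lsum_map_reindex (fun i => g (offset m i)) s _ Hrange Hinj).
    f_equal; apply map_ext_in; intros k Hk; apply in_seq in Hk.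
    specialize (Hon k ltac:(lia)); unfold on_line in Hon.
    rewrite HP in Hon by lia; cbn [fst snd] in Hon.
    cbv beta; f_equal; rewrite <- Hon; unfold abscissa; ring. }
  assert (Hcx : cx = 0).
  { pose proof (Hvertex (fun y => y)) as Hsum; cbv beta in Hsum.
    rewrite lsum_abscissa, lsum_offset in Hsum by lia.
    pose proof (lt_0_INR (S m) ltac:(lia)); nra. }
  pose proof (Hvertex (fun y => (y - cx) ^ 3)) as Hcube; cbv beta in Hcube.
  rewrite lsum_abscissa_centered_cube, Hcx in Hcube by lia.
  rewrite (map_ext _ (fun i => offset m i ^ 3)), lsum_offset_cube in Hcube by (intro; ring).
  assert (Hm3 : 3 <= INR m) by (replace 3 with (INR 3) by (simpl; ring); apply le_INR; lia).
  assert (Ht : 1 < triangular m) by (unfold triangular; nra).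
  assert (0 < triangular m ^ 2 * (triangular m - 1))
    by (apply Rmult_lt_0_compat; [apply pow_lt|]; lra).
  nra.
Qed.
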